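(* Let $f$ be a norm on $\mathbb{R}^n$ and let $\alpha=(\alpha_1,\dots,\alpha_n)\in\mathbb{R}^n$ satisfy $\dim_{\mathbb{Z}}(1,\alpha_1,\dots,\alpha_n)\ge 3$. Let $\tau_\nu=(p_\nu,a_\nu)$ be the sequence of $f$-best simultaneous approximations to $\alpha$ and $\xi_\nu=\alpha p_\nu-a_\nu$. Then $$f(\xi_\nu)\,p_{\nu+1}\to+\infty\quad(\nu\to+\infty).$$
   Context: A norm $f$ here is a continuous function $\mathbb{R}^n\to\mathbb{R}_+$ with $f(x)=0\iff x=0$, $f(-x)=f(x)$, $f(tx)=tf(x)$ for $t\ge0$, and convex unit ball $B_f^1=\{y:f(y)\le1\}$ with $0$ in its interior. For $\alpha\in\mathbb{R}^n$, an $f$-best simultaneous approximation is an integer point $\tau=(p,a_1,\dots,a_n)\in\mathbb{Z}^{n+1}$ with $p\ge1$ such that $f(\alpha q-b)>f(\alpha p-a)$ for all $(q,b)\in\mathbb{Z}^{n+1}$ with $1\le q\le p-1$ and for all $(p,b)$ with $b\ne a$. They form a sequence $\tau_\nu=(p_\nu,a_\nu)$ with $p_1<p_2<\dots$ and $f(\alpha p_1-a_1)>f(\alpha p_2-a_2)>\dots$ (infinite when $\alpha\notin\mathbb{Q}^n$). $\dim_{\mathbb{Z}}(1,\alpha_1,\dots,\alpha_n)$ is the maximal number of elements among $1,\alpha_1,\dots,\alpha_n$ linearly independent over $\mathbb{Z}$. *)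

From HB Require Import structures.
From mathcomp Require Import all_boot all_order all_algebra.
From mathcomp Require Import all_classical all_reals all_analysis.
Set Implicit Arguments. Unset Strict Implicit. Unset Printing Implicit Defensive.
Import Order.TTheory GRing.Theory Num.Theory.
Import numFieldNormedType.Exports.
Local Open Scope classical_set_scope.
Local Open Scope ring_scope.

Definition unit_ball (R : realType) (n : nat) (f : 'rV[R]_n -> R) : set 'rV[R]_n :=
  [set y | f y <= 1].

Definition convex_subset (R : realType) (n : nat) (A : set 'rV[R]_n) : Prop :=
  forall x y (t : R), A x -> A y -> 0 <= t -> t <= 1 -> A (t *: x + (1 - t) *: y).

Definition is_norm (R : realType) (n : nat) (f : 'rV[R]_n -> R) : Prop :=
  continuous f /\
  (forall x, 0 <= f x) /\
  (forall x, f x = 0 <-> x = 0) /\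
  (forall x, f (- x) = f x) /\
  (forall (t : R) x, 0 <= t -> f (t *: x) = t * f x) /\
  convex_subset (unit_ball f) /\
  (interior (unit_ball f)) 0.

Definition approx_err (R : realType) (n : nat) (alpha : 'rV[R]_n) (q : nat)
    (b : 'rV[int]_n) : 'rV[R]_n :=
  q%:R *: alpha - map_mx (fun z : int => z%:~R) b.

Definition best_approx (R : realType) (n : nat) (f : 'rV[R]_n -> R)
    (alpha : 'rV[R]_n) (p : nat) (a : 'rV[int]_n) : Prop :=
  [/\ (1 <= p)%N,
      (forall (q : nat) (b : 'rV[int]_n), (1 <= q <= p - 1)%N ->
          f (approx_err alpha p a) < f (approx_err alpha q b))
    & (forall b : 'rV[int]_n, b <> a ->
          f (approx_err alpha p a) < f (approx_err alpha p b))].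

Definition one_alpha (R : realType) (n : nat) (alpha : 'rV[R]_n) : 'I_n.+1 -> R :=
  fun i => match unlift ord0 i with None => 1 | Some j => alpha 0 j end.

(* dim_Z(x_0, ..., x_{m-1}) >= k : some k elements of the family are
   linearly independent over Z *)
Definition dimZ_ge (R : realType) (m : nat) (x : 'I_m -> R) (k : nat) : Prop :=
  exists S : {set 'I_m}, (k <= #|S|)%N /\
    forall c : 'I_m -> int,
      \sum_(i in S) (c i)%:~R * x i = 0 -> forall i, i \in S -> c i = 0.

From HB Require Import structures.
From mathcomp Require Import all_boot all_order all_algebra.
From mathcomp Require Import all_classical all_reals all_analysis.
From mathcomp Require Import zify ring lra.
Import Order.TTheory GRing.Theory Num.Theory.
Import numFieldNormedType.Exports.
Local Open Scope classical_set_scope.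
Local Open Scope ring_scope.

(* For consecutive best approximations (p, a), (q, b) the integer vector
   m = p b - q a equals q xi_p - p xi_q; it is nonzero and f(m) <= 2 q f(xi_p).
   Its minors m_j alpha_i - m_i alpha_j differ from integers by
   (m_j xi_i - m_i xi_j) / p = O(|m| / p).  Integral minors would put
   1, alpha_1, ..., alpha_n in the rank-2 module (Z + Z alpha_j) / m_j,
   contradicting dim_Z >= 3, so every nonzero m has a minor at positive
   distance from Z.  If q f(xi_p) < A, then m lies in a finite set of vectors,
   and once p is large no vector of that set has all minors within O(1/p) of
   integers. *)

Section Norm.
Context {R : realType} {n : nat} {f : 'rV[R]_n -> R}.
Hypothesis f_norm : is_norm f.

Lemma normf_continuous : continuous f.
Proof. by case: f_norm. Qed.

Lemma normf_ge0 x : 0 <= f x.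
Proof. by case: f_norm => _ []. Qed.

Lemma normf_eq0 x : f x = 0 <-> x = 0.
Proof. by case: f_norm => _ [_ []]. Qed.

Lemma normf0 : f 0 = 0.
Proof. exact/normf_eq0. Qed.

Lemma normfN x : f (- x) = f x.
Proof. by case: f_norm => _ [_ [_ []]]. Qed.

Lemma normfZ t x : 0 <= t -> f (t *: x) = t * f x.
Proof. by case: f_norm => _ [_ [_ [_ [hZ _]]]]; apply: hZ. Qed.

Lemma normf_unit_ball_convex : convex_subset (unit_ball f).
Proof. by case: f_norm => _ [_ [_ [_ [_ []]]]]. Qed.

Lemma normf_gt0 x : x != 0 -> 0 < f x.
Proof.
by move=> x0; rewrite lt_def normf_ge0 andbT; apply: contra_neq x0 => /normf_eq0.
Qed.

Lemma ler_normfD x y : f (x + y) <= f x + f y.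
Proof.
have [->|x0] := eqVneq x 0; first by rewrite add0r normf0 add0r.
have [->|y0] := eqVneq y 0; first by rewrite addr0 normf0 addr0.
have [fx fy] := (normf_gt0 _ x0, normf_gt0 _ y0).
set s := f x + f y; have s0 : 0 < s by rewrite addr_gt0.
have ball_unit z : 0 < f z -> unit_ball f ((f z)^-1 *: z).
  by move=> fz; rewrite /unit_ball /= normfZ ?mulVf ?gt_eqF // invr_ge0 ltW.
have t0 : 0 <= f x / s by rewrite divr_ge0 ?ltW.
have t1 : f x / s <= 1 by rewrite ler_pdivrMr // mul1r lerDl ltW.
(* (x + y) / s is the convex combination of x / f x and y / f y
   with weights f x / s and f y / s *)
have := normf_unit_ball_convex _ _ _ (ball_unit _ fx) (ball_unit _ fy) t0 t1.
have -> : 1 - f x / s = f y / s by rewrite /s; field; rewrite gt_eqF.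
rewrite !scalerA [_ / s * _]mulrAC [f y / s * _]mulrAC !mulfV ?gt_eqF // !mul1r -scalerDr.
by rewrite /unit_ball /= normfZ ?ler_pdivrMl ?mulr1 // invr_ge0 ltW.
Qed.

Lemma coord_le_normf : exists2 K : R, 0 < K & forall (x : 'rV[R]_n) i, `|x 0 i| <= K * f x.
Proof.
have coord_le_norm (x : 'rV[R]_n) i : `|x 0 i| <= `|x|.
  by rewrite [leRHS]mx_normrE; apply/bigmax_geP; right; exists (0, i).
have [n0|n_gt0] := posnP n.
  by exists 1 => // x i; have := ltn_ord i; rewrite {2}n0.
pose S := [set x : 'rV[R]_n | `|x| = 1].
have S0 : S !=set0.
  pose x1 : 'rV[R]_n := const_mx 1.
  have x1_gt0 : 0 < `|x1|.
    by apply: lt_le_trans (coord_le_norm x1 (Ordinal n_gt0)); rewrite mxE normr1.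
  by exists (`|x1|^-1 *: x1); rewrite /S /= normrZ normfV normr_id mulVf ?gt_eqF.
have S_compact : compact S.
  apply: bounded_closed_compact.
    by exists 1; split=> // M M1 x /= ->; apply: ltW.
  apply: (preimage_closed (f := fun x : 'rV[R]_n => `|x|) (D := [set (1 : R)])).
    by move=> x _; exact: norm_continuous.
  exact: closed_eq.
have [c /[!inE] c1 minc] := EVT_min_rV S0 S_compact (continuous_subspaceT normf_continuous).
have fc : 0 < f c by apply: normf_gt0; rewrite -normr_gt0 c1.
exists (f c)^-1; first by rewrite invr_gt0.
move=> x i; have [->|x0] := eqVneq x 0.
  by rewrite mxE normr0 normf0 mulr0.
have nx : 0 < `|x| by rewrite normr_gt0.
have : f c <= f (`|x|^-1 *: x).
  by apply: minc; rewrite inE /S /= normrZ normfV normr_id mulVf ?gt_eqF.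
rewrite normfZ ?invr_ge0 ?(ltW nx) // !ler_pdivlMl // => h.
by apply: le_trans h; rewrite mulrC ler_pM2r // coord_le_norm.
Qed.

End Norm.

Lemma exists_orthogonal3 {K : comNzRingType} (u1 u2 u3 v1 v2 v3 : K) :
  exists c1 c2 c3 : K, (c1, c2, c3) != (0, 0, 0) /\
    c1 * u1 + c2 * u2 + c3 * u3 = 0 /\ c1 * v1 + c2 * v2 + c3 * v3 = 0.
Proof.
pose uxv := (u2 * v3 - u3 * v2, u3 * v1 - u1 * v3, u1 * v2 - u2 * v1).
have [uv0|uv_nz] := eqVneq uxv (0, 0, 0); last first.
  by exists uxv.1.1, uxv.1.2, uxv.2; split=> //; split; rewrite /uxv /=; ring.
case: uv0 => h1 h2 h3.
have [u0|u_nz] := eqVneq (u1, u2, u3) (0, 0, 0).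
  case: u0 => -> -> ->.
  have [v12|v12_nz] := eqVneq (v2, - v1, 0 : K) (0, 0, 0).
    case: v12 => _ /eqP; rewrite oppr_eq0 => /eqP->.
    by exists 1, 0, 0; split; [rewrite !xpair_eqE oner_eq0 | split; ring].
  by exists v2, (- v1), 0; split=> //; split; ring.
(* u x e1 and u x e2 are orthogonal to u, and to v because u x v = 0 *)
have [ue1|ue1_nz] := eqVneq (0 : K, u3, - u2) (0, 0, 0); last first.
  exists 0, u3, (- u2); split=> //; split; first ring.
  by transitivity (- (u2 * v3 - u3 * v2)); [ring | rewrite h1 oppr0].
case: ue1 => u3_0 /eqP; rewrite oppr_eq0 => /eqP u2_0.
have u1_nz : u1 != 0 by apply: contraNneq u_nz => u1_0; rewrite u1_0 u2_0 u3_0.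
exists (- u3), 0, u1; split; first by rewrite !xpair_eqE (negbTE u1_nz) andbF.
split; first ring.
by transitivity (- (u3 * v1 - u1 * v3)); [ring | rewrite h2 oppr0].
Qed.

Lemma not_dimZ_ge3_of_span2 (R : realType) (m : nat) (x : 'I_m -> R) (g1 g2 : R) :
  (forall s, exists u v : int, x s = u%:~R * g1 + v%:~R * g2) -> ~ dimZ_ge x 3.
Proof.
move=> span [S [/card_gt2P [s1 [s2 [s3 [[S1 S2 S3] [d12 d23 d31]]]]]] indep].
have [u1 [v1 x1]] := span s1; have [u2 [v2 x2]] := span s2; have [u3 [v3 x3]] := span s3.
have [c1 [c2 [c3 [c_nz [cu cv]]]]] := exists_orthogonal3 u1 u2 u3 v1 v2 v3.
pose c s := if s == s1 then c1 else if s == s2 then c2 else if s == s3 then c3 else 0.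
have [cs1 cs2 cs3] : [/\ c s1 = c1, c s2 = c2 & c s3 = c3].
  by rewrite /c eqxx eq_sym (negbTE d12) eqxx (negbTE d31) eq_sym (negbTE d23) eqxx.
suff /indep c0 : \sum_(s in S) (c s)%:~R * x s = 0.
  by move: c_nz; rewrite -cs1 -cs2 -cs3 !c0.
rewrite (bigD1 s1) //= (bigD1 s2) /=; last by rewrite S2 eq_sym d12.
rewrite (bigD1 s3) /=; last by rewrite S3 d31 eq_sym d23.
rewrite big1 => [|s /andP[/andP[/andP[_ /negbTE s1'] /negbTE s2'] /negbTE s3']]; last first.
  by rewrite /c s1' s2' s3' mul0r.
rewrite cs1 cs2 cs3 x1 x2 x3 addr0.
transitivity ((c1 * u1 + c2 * u2 + c3 * u3)%:~R * g1 + (c1 * v1 + c2 * v2 + c3 * v3)%:~R * g2).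
  by rewrite !rmorphD !rmorphM /=; ring.
by rewrite cu cv !mul0r addr0.
Qed.

Section NearInt.
Context {R : realType}.

Definition near_int (e x : R) : Prop := exists w : int, `|x - w%:~R| <= e.

Lemma near_int_le e e' x : e <= e' -> near_int e x -> near_int e' x.
Proof. by move=> ee' [w xw]; exists w; apply: le_trans ee'. Qed.

Lemma int_of_near_int_gt0 x : (forall e, 0 < e -> near_int e x) -> exists w : int, x = w%:~R.
Proof.
move=> near; have third_gt0 : 0 < 3^-1 :> R by rewrite invr_gt0.
have [w xw] := near _ third_gt0.
exists w; apply/eqP; rewrite -subr_eq0 -normr_le0; apply/ler_addgt0Pr => e e0.
have [w' xw'] : near_int (Num.min e 3^-1) x by apply: near; rewrite lt_min e0 third_gt0.
have [xw'e xw'3] : `|x - w'%:~R| <= e /\ `|x - w'%:~R| <= 3^-1.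
  by split; apply: le_trans xw' _; rewrite ge_min lexx ?orbT.
suff -> : w = w' by rewrite add0r.
have : `|(w - w')%:~R : R| < 1.
  have -> : (w - w')%:~R = (x - w'%:~R) - (x - w%:~R) :> R by rewrite rmorphB /=; ring.
  apply: le_lt_trans (ler_normB _ _) _; lra.
by rewrite -intr_norm ltrz1 => ?; lia.
Qed.
End NearInt.

Definition centered_int (B : nat) (k : 'I_(2 * B).+1) : int := k%:Z - B%:Z.

Lemma bounded_int_mx_centered (B r c : nat) (M : 'M[int]_(r, c)) :
  (forall i j, `|M i j| <= B%:Z) ->
  exists T : 'M['I_(2 * B).+1]_(r, c), map_mx (centered_int B) T = M.
Proof.
move=> M_le; exists (map_mx (fun z : int => inord (absz (z + B%:Z))) M).
apply/matrixP => i j; rewrite !mxE /centered_int inordK; have := M_le i j; lia.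
Qed.

Section Minors.
Context {R : realType} {n : nat}.
Variable alpha : 'rV[R]_n.

Definition minors_near_int (e : R) (m : 'rV[int]_n) : Prop :=
  forall i j, near_int e ((m 0 j)%:~R * alpha 0 i - (m 0 i)%:~R * alpha 0 j).

Lemma integral_minors_not_dimZ_ge3 (m : 'rV[int]_n) : m != 0 ->
    (forall i j, exists w : int, (m 0 j)%:~R * alpha 0 i - (m 0 i)%:~R * alpha 0 j = w%:~R) ->
  ~ dimZ_ge (one_alpha alpha) 3.
Proof.
move=> m_nz minors.
have [j0 mj0] : exists j0, m 0 j0 != 0.
  apply/existsP; apply: contraR m_nz => /existsPn m0; apply/eqP/matrixP => i j.
  by rewrite ord1 mxE; apply/eqP/negbNE.
(* with mu = m_j0, the minors put each entry of (1, alpha) in Z / mu + Z alpha_j0 / mu *)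
pose mu : R := (m 0 j0)%:~R; have mu_nz : mu != 0 by rewrite intr_eq0.
apply: (@not_dimZ_ge3_of_span2 _ _ _ mu^-1 (alpha 0 j0 / mu)) => s.
rewrite /one_alpha; case: unliftP => [j|] _.
  have [w minor_w] := minors j j0; exists w, (m 0 j).
  by rewrite -minor_w; field.
by exists (m 0 j0), 0; rewrite mulfV // mul0r addr0.
Qed.

Lemma eventually_not_minors_near_int {m : 'rV[int]_n} {eps : nat -> R} :
    dimZ_ge (one_alpha alpha) 3 -> m != 0 -> eps @ \oo --> 0 ->
  \forall k \near \oo, ~ minors_near_int (eps k) m.
Proof.
move=> dim3 m_nz eps0.
have [e e0 not_near] : exists2 e, 0 < e & ~ minors_near_int e m.
  apply: contrapT => all_near; apply: (integral_minors_not_dimZ_ge3 _ m_nz _ dim3) => i j.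
  apply: int_of_near_int_gt0 => e e0; apply: contrapT => not_near.
  by apply: all_near; exists e => // /(_ i j).
apply: filterS (cvgr0_norm_lt _ eps0 _ e0) => k /ltr_normlW eps_e near_eps.
by apply: not_near => i j; apply: near_int_le (ltW eps_e) (near_eps i j).
Qed.

Lemma eventually_not_minors_near_int_bounded (C : R) {eps : nat -> R} :
    dimZ_ge (one_alpha alpha) 3 -> eps @ \oo --> 0 ->
  \forall k \near \oo, forall m : 'rV[int]_n, m != 0 ->
    (forall j, `|(m 0 j)%:~R| <= C) -> ~ minors_near_int (eps k) m.
Proof.
move=> dim3 eps0; pose B := `|Num.floor C|%N.
pose mB (t : 'rV['I_(2 * B).+1]_n) : 'rV[int]_n := map_mx (centered_int B) t.
have : \forall k \near \oo, forall t : 'rV['I_(2 * B).+1]_n,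
    mB t != 0 -> ~ minors_near_int (eps k) (mB t).
  apply: filter_forall => t; have [_|t_nz] := eqVneq (mB t) 0; first exact: nearW.
  by have := eventually_not_minors_near_int dim3 t_nz eps0; apply: filterS => k + _.
apply: filterS => k gap m m_nz m_le.
have [t mt] : exists t, mB t = m.
  apply: bounded_int_mx_centered => i j; rewrite ord1.
  have := m_le j; rewrite -intr_norm -floor_ge_int => /le_trans; apply.
  by rewrite /B abszE ler_norm.
by move: m_nz; rewrite -mt; apply: gap.
Qed.

End Minors.

Section ApproxCross.
Context {R : realType} {n : nat} {f : 'rV[R]_n -> R}.
Hypothesis f_norm : is_norm f.
Variable alpha : 'rV[R]_n.
Variables (p q : nat) (a b : 'rV[int]_n).

Let xi_p := approx_err alpha p a.
Let xi_q := approx_err alpha q b.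

Definition approx_cross : 'rV[int]_n := p%:Z *: b - q%:Z *: a.

Lemma approx_crossE :
  map_mx (fun z : int => z%:~R) approx_cross = q%:R *: xi_p - p%:R *: xi_q :> 'rV[R]_n.
Proof.
apply/matrixP => i j; rewrite /xi_p /xi_q /approx_err !mxE.
by rewrite rmorphB !rmorphM /= -!pmulrn; ring.
Qed.

Lemma normf_approx_cross_le : (p <= q)%N -> f xi_q <= f xi_p ->
  f (map_mx (fun z : int => z%:~R) approx_cross) <= 2 * (q%:R * f xi_p).
Proof.
move=> p_le_q f_le; rewrite approx_crossE; apply: le_trans (ler_normfD f_norm _ _) _.
rewrite normfN // !(normfZ f_norm) // mulr_natl mulr2n lerD2l.
by apply: ler_pM; rewrite ?ler_nat ?(normf_ge0 f_norm).
Qed.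

Lemma approx_cross_neq0 : (0 < p <= q)%N -> f xi_q < f xi_p -> approx_cross != 0.
Proof.
case/andP=> p_gt0 p_le_q f_lt; apply: contraTneq f_lt => cross0.
have : q%:R *: xi_p = p%:R *: xi_q.
  apply/eqP; rewrite -subr_eq0 -approx_crossE cross0; apply/eqP/matrixP => i j.
  by rewrite !mxE.
move/(congr1 f); rewrite !(normfZ f_norm) // => fpq; rewrite -leNgt.
have p_pos : 0 < p%:R :> R by rewrite ltr0n.
by rewrite -(ler_pM2l p_pos) -fpq ler_wpM2r ?(normf_ge0 f_norm) ?ler_nat.
Qed.

Lemma minors_near_int_approx_cross (M X : R) : (0 < p)%N ->
    (forall j, `|(approx_cross 0 j)%:~R| <= M) -> (forall i, `|xi_p 0 i| <= X) ->
  minors_near_int alpha (2 * M * X / p%:R) approx_cross.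
Proof.
move=> p_gt0 cross_le xi_le i j.
set mc := approx_cross.
have p_pos : 0 < p%:R :> R by rewrite ltr0n.
exists (b 0 j * a 0 i - b 0 i * a 0 j).
have -> : (mc 0 j)%:~R * alpha 0 i - (mc 0 i)%:~R * alpha 0 j -
    (b 0 j * a 0 i - b 0 i * a 0 j)%:~R =
    ((mc 0 j)%:~R * xi_p 0 i - (mc 0 i)%:~R * xi_p 0 j) / p%:R.
  rewrite /mc /approx_cross /xi_p /approx_err !mxE !rmorphB !rmorphM /= -!pmulrn.
  by field; rewrite gt_eqF.
rewrite normrM normfV (gtr0_norm p_pos) ler_pM2r ?invr_gt0 //.
apply: le_trans (ler_normB _ _) _; rewrite !normrM -mulrA mulr_natl mulr2n.
by apply: lerD; apply: ler_pM.
Qed.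

End ApproxCross.

Lemma cvg_div_nat_ge_id {R : realType} (E : R) {g : nat -> nat} :
  (forall k, k <= g k)%N -> (E / (g k)%:R) @[k --> \oo] --> 0.
Proof.
move=> g_ge; have g_oo : ((g k)%:R : R) @[k --> \oo] --> +oo.
  apply/cvgryPge => M; apply: filterS (nbhs_infty_ger M) => k /le_trans; apply.
  by rewrite ler_nat.
rewrite -(mulr0 E); apply: cvgMr; apply/gtr0_cvgV0 => //.
exact: (cvgryPgt _).1 g_oo 0.
Qed.

Lemma best_approx_lt {R : realType} {n : nat} {f : 'rV[R]_n -> R} {alpha : 'rV[R]_n}
    {q : nat} {b : 'rV[int]_n} (p : nat) (a : 'rV[int]_n) :
  best_approx f alpha q b -> (0 < p < q)%N ->
  f (approx_err alpha q b) < f (approx_err alpha p a).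
Proof. by case=> _ best _ /andP[p_gt0 p_lt_q]; apply: best; lia. Qed.

Theorem theorem2p2 (R : realType) (n : nat) (f : 'rV[R]_n -> R)
    (alpha : 'rV[R]_n) (p : nat -> nat) (a : nat -> 'rV[int]_n) :
  is_norm f ->
  dimZ_ge (one_alpha alpha) 3 ->
  (* (p_nu, a_nu) is the sequence of all f-best approximations, ordered by p *)
  (forall nu, best_approx f alpha (p nu) (a nu)) ->
  (forall nu, (p nu < p nu.+1)%N) ->
  (forall q b, best_approx f alpha q b -> exists nu, q = p nu /\ b = a nu) ->
  (fun nu => f (approx_err alpha (p nu) (a nu)) * (p nu.+1)%:R) @ \oo --> +oo.
Proof.
(* only that each (p_nu, a_nu) is a best approximation is used, not that they are all *)
move=> f_norm dim3 best p_lt _.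
set xi := fun nu => approx_err alpha (p nu) (a nu).
pose m nu := approx_cross (p nu) (p nu.+1) (a nu) (a nu.+1).
have p_gt0 nu : (0 < p nu)%N by case: (best nu).
have p_ge nu : (nu <= p nu)%N by elim: nu => // nu; have := p_lt nu; lia.
have f_lt nu : f (xi nu.+1) < f (xi nu).
  by apply: (best_approx_lt _ _ (best nu.+1)); rewrite p_gt0 p_lt.
have f_le0 nu : f (xi nu) <= f (xi 0) by elim: nu => // nu; apply: le_trans (ltW (f_lt nu)).
have [K K_gt0 coord_le] := coord_le_normf f_norm.
rewrite cvgryPge => A; pose C := K * (2 * A); pose E := 2 * C * (K * f (xi 0)).
have := eventually_not_minors_near_int_bounded alpha C dim3 (cvg_div_nat_ge_id E p_ge).
apply: filterS => nu gap; rewrite leNgt; apply/negP => small.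
have m_le j : `|(m nu 0 j)%:~R| <= C.
  have := coord_le (map_mx (fun z : int => z%:~R) (m nu)) j.
  rewrite mxE => /le_trans; apply; apply: (ler_wpM2l (ltW K_gt0)).
  have := normf_approx_cross_le f_norm alpha _ _ _ _ (ltnW (p_lt nu)) (ltW (f_lt nu)).
  move=> /le_trans; apply.
  by rewrite ler_pM2l // mulrC ltW.
apply: (gap (m nu) _ m_le).
  by apply: (approx_cross_neq0 f_norm alpha) (f_lt nu); rewrite p_gt0 ltnW.
apply: minors_near_int_approx_cross => // i.
exact: le_trans (coord_le _ i) (ler_wpM2l (ltW K_gt0) (f_le0 nu)).
Qed.
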